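(* Let $f,g\in\mathbb{Q}[x]$ with $f\neq0$, let $d=\gcd(f,g)$, and assume $\gcd(f/d,d)=1$ and that $g(\xi)\ge0$ at every real root $\xi$ of $f$. Then there exists $b\in\mathbb{Q}[x]$ such that $b$ is relatively prime to $f/d$, $b(\xi)>0$ at every real root $\xi$ of $f/d$, and $b\,d^2\equiv g\pmod f$. *)

From HB Require Import structures.
From Stdlib Require Import Reals.
From mathcomp Require Import all_boot all_order all_algebra.
From mathcomp Require Import Rstruct.
Set Implicit Arguments. Unset Strict Implicit. Unset Printing Implicit Defensive.
Import Order.TTheory GRing.Theory Num.Theory.
Local Open Scope ring_scope.

Definition realpoly (p : {poly rat}) : {poly R} := map_poly (ratr : rat -> R) p.

Definition real_root (p : {poly rat}) (xi : R) : bool := root (realpoly p) xi.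

From Stdlib Require Import Reals.
From mathcomp Require Import all_boot all_order all_algebra.
From mathcomp Require Import Rstruct.
From mathcomp Require Import ring.
Import Order.TTheory GRing.Theory Num.Theory.
Local Open Scope ring_scope.

(* Write d = gcd(f, g), h = f/d, g = g1 d, and take a Bezout relation
   u d + v h = 1, which exists since h and d are coprime.  Then
   b := g1 u works: b d^2 - g = g1 d (u d - 1) = -g1 v h d is a multiple of
   f = h d; b is coprime to h because g1 and u both are; and at a real root
   xi of h we have u(xi) d(xi) = 1, hence b(xi) = g(xi) u(xi)^2 >= 0, with
   b(xi) <> 0 by coprimality. *)

Lemma horner_realpolyD (p q : {poly rat}) (x : R) :
  (realpoly (p + q)).[x] = (realpoly p).[x] + (realpoly q).[x].
Proof. by rewrite /realpoly rmorphD hornerD. Qed.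

Lemma horner_realpolyM (p q : {poly rat}) (x : R) :
  (realpoly (p * q)).[x] = (realpoly p).[x] * (realpoly q).[x].
Proof. by rewrite /realpoly rmorphM hornerM. Qed.

Lemma real_root_dvdp {p q : {poly rat}} {x : R} :
  p %| q -> real_root p x -> real_root q x.
Proof.
case/dvdpP=> r ->; rewrite /real_root /realpoly rmorphM rootM => ->.
by rewrite orbT.
Qed.

Lemma coprimep_real_root {p q : {poly rat}} {x : R} :
  coprimep p q -> real_root p x -> (realpoly q).[x] != 0.
Proof.
by move=> cpq; apply: coprimep_root; rewrite /realpoly coprimep_map.
Qed.

Lemma Bezout_real_root {p q u v : {poly rat}} {x : R} :
  u * p + v * q = 1 -> real_root q x ->
  (realpoly u).[x] * (realpoly p).[x] = 1.
Proof.
move=> Euv /rootP qx0; have := congr1 (fun r => (realpoly r).[x]) Euv.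
by rewrite /= horner_realpolyD !horner_realpolyM qx0 mulr0 addr0 /realpoly
  rmorph1 hornerC.
Qed.

Lemma dvdp_Bezout_sqr {F : fieldType} {h d u v : {poly F}} (c : {poly F}) :
  u * d + v * h = 1 -> h * d %| c * u * d ^+ 2 - c * d.
Proof.
move=> Euv; apply/dvdpP; exists (- (c * v)).
have -> : c * u * d ^+ 2 - c * d = c * d * (u * d - 1) by ring.
by rewrite -Euv; ring.
Qed.

Lemma Bezout_real_root_gt0 {h d c u v : {poly rat}} {x : R} :
  u * d + v * h = 1 -> coprimep h (c * u) -> real_root h x ->
  0 <= (realpoly (c * d)).[x] -> 0 < (realpoly (c * u)).[x].
Proof.
move=> Euv hcu hx cd_ge0; rewrite lt0r (coprimep_real_root hcu hx) /=.
have ud1 := Bezout_real_root Euv hx.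
have -> : (realpoly (c * u)).[x] = (realpoly (c * d)).[x] * (realpoly u).[x] ^+ 2.
  by rewrite !horner_realpolyM -[LHS]mulr1 -ud1; ring.
by rewrite mulr_ge0 ?sqr_ge0.
Qed.

Theorem mainTheorem9 (f g : {poly rat}) :
  f != 0 ->
  coprimep (f %/ gcdp f g) (gcdp f g) ->
  (forall xi : R, real_root f xi -> 0 <= (realpoly g).[xi]) ->
  exists b : {poly rat},
    [/\ coprimep b (f %/ gcdp f g),
        (forall xi : R, real_root (f %/ gcdp f g) xi -> 0 < (realpoly b).[xi])
      & f %| b * (gcdp f g) ^+ 2 - g].
Proof.
move=> f0 chd g_ge0.
set d := gcdp f g in chd *; set h := f %/ d in chd *; set g1 := g %/ d.
have Ef : f = h * d by rewrite divpK ?dvdp_gcdl.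
have Eg : g = g1 * d by rewrite divpK ?dvdp_gcdr.
have [[u v] /= Euv] : exists w : {poly rat} * {poly rat}, w.1 * d + w.2 * h = 1.
  by apply/Bezout_eq1_coprimepP; rewrite coprimep_sym.
have chb : coprimep h (g1 * u).
  rewrite coprimepMr coprimep_div_gcd ?f0 //=.
  by apply/Bezout_eq1_coprimepP; exists (v, d); rewrite /= addrC mulrC.
exists (g1 * u); split; first by rewrite coprimep_sym.
- move=> xi hxi.
  have fxi : real_root f xi by rewrite Ef (real_root_dvdp _ hxi) ?dvdp_mulr.
  by apply: Bezout_real_root_gt0 Euv chb hxi _; rewrite -Eg g_ge0.
- by rewrite {1}Ef {1}Eg; exact: (dvdp_Bezout_sqr g1 Euv).
Qed.
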